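(* Let $N \ge 2$ and $1 \le M < N$ be integers, and let $K$ be an $N \times N$ real symmetric positive definite matrix. For an index set $\alpha \subset \{1,\dots,N\}$ with $|\alpha| = M$, let $\alpha^c = \{1,\dots,N\}\setminus\alpha$ and define the Schur complement $$K/K_{\alpha\alpha} \;=\; K_{\alpha^c\alpha^c} - K_{\alpha^c\alpha}\,K_{\alpha\alpha}^{-1}\,K_{\alpha\alpha^c},$$ an $(N-M)\times(N-M)$ symmetric positive definite matrix (rows and columns listed in increasing order of the indices in $\alpha^c$). Let $\mathcal{M} = \{K/K_{\alpha\alpha} : \alpha \subset \{1,\dots,N\},\ |\alpha| = M\}$, partially ordered by the Loewner order. Let $\alpha^*$ be an index set of size $M$ that maximizes $\operatorname{Tr}\big((K/K_{\alpha\alpha})^{-1}\big)$ over all index sets $\alpha$ of size $M$, and let $A^* = K/K_{\alpha^*\alpha^*}$. Then there is no $B \in \mathcal{M}$ with $A^* > B$, i.e. there is no $B \in \mathcal{M}$ such that $A^* - B$ is positive semidefinite and $A^* \neq B$.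
   Context: Loewner order on symmetric matrices of the same size: $A \le B$ iff $B - A$ is positive semidefinite; $A < B$ (equivalently $B > A$) means $A \le B$ and $A \ne B$. $K_{\beta\gamma}$ denotes the submatrix of $K$ with rows indexed by $\beta$ and columns indexed by $\gamma$. $\operatorname{Tr}$ denotes the trace. *)

From HB Require Import structures.
From mathcomp Require Import all_boot all_order all_algebra.
From mathcomp Require Import reals.
Set Implicit Arguments. Unset Strict Implicit. Unset Printing Implicit Defensive.
Import Order.TTheory GRing.Theory Num.Theory.
Local Open Scope ring_scope.

(* Submatrix K_{beta gamma}: rows indexed by the elements of beta, columns by
   the elements of gamma, both listed in increasing order (enum of a set of
   'I_N is increasing). The sizes m, n are meant to be #|beta|, #|gamma|;
   out-of-range entries (never used when the sizes match) are 0. *)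
Definition submx_idx (R : nzRingType) (N : nat) (K : 'M[R]_N)
  (beta gamma : {set 'I_N}) (m n : nat) : 'M[R]_(m, n) :=
  \matrix_(i < m, j < n)
    match onth (enum beta) i, onth (enum gamma) j with
    | Some a, Some b => K a b
    | _, _ => 0
    end.

Definition schur_compl (R : realType) (N M : nat) (K : 'M[R]_N)
  (alpha : {set 'I_N}) : 'M[R]_(N - M) :=
  submx_idx K (~: alpha) (~: alpha) (N - M) (N - M)
  - submx_idx K (~: alpha) alpha (N - M) M
    *m invmx (submx_idx K alpha alpha M M)
    *m submx_idx K alpha (~: alpha) M (N - M).

Definition sym_mx (R : realType) (n : nat) (A : 'M[R]_n) : Prop := A^T = A.

Definition posdef (R : realType) (n : nat) (A : 'M[R]_n) : Prop :=
  sym_mx A /\ forall v : 'rV[R]_n, v != 0 -> 0 < (v *m A *m v^T) 0 0.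

Definition psd (R : realType) (n : nat) (A : 'M[R]_n) : Prop :=
  sym_mx A /\ forall v : 'rV[R]_n, 0 <= (v *m A *m v^T) 0 0.

Definition loewner_le (R : realType) (n : nat) (A B : 'M[R]_n) : Prop :=
  psd (B - A).
Definition loewner_lt (R : realType) (n : nat) (A B : 'M[R]_n) : Prop :=
  loewner_le A B /\ A <> B.

From mathcomp Require Import all_boot all_order all_algebra.
From mathcomp Require Import reals lra.
Import Order.TTheory GRing.Theory Num.Theory.
Local Open Scope ring_scope.
Set Implicit Arguments. Unset Strict Implicit. Unset Printing Implicit Defensive.

(* Writing E_a for the matrix selecting the coordinates in a, the Schur
   complement K/K_aa is the compression T K T^T with
   T = E_{a^c} - K_{a^c a} K_aa^-1 E_a; since T E_{a^c}^T = 1, it is positive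
   definite.  Inversion reverses the Loewner order on positive definite
   matrices, so B < A* would make B^-1 - A*^-1 a nonzero positive
   semidefinite matrix, whose trace is positive: Tr(B^-1) > Tr(A*^-1),
   contradicting the maximality of alpha*. *)

Section SelectionMatrix.
Variables (R : nzRingType) (N : nat).

Definition sel_mx (b : {set 'I_N}) (m : nat) : 'M[R]_(m, N) :=
  \matrix_(i < m, j < N) (onth (enum b) i == Some j)%:R.

Lemma sum_onth_eq (F : 'I_N -> R) (o : option 'I_N) :
  \sum_k F k *+ (o == Some k) = if o is Some a then F a else 0.
Proof.
case: o => [a|]; last by rewrite big1.
rewrite (bigD1 a) //= eqxx big1 ?addr0 // => k /negbTE ka.
by rewrite (inj_eq Some_inj) eq_sym ka.
Qed.

Lemma submx_idxE (K : 'M[R]_N) (b g : {set 'I_N}) (m n : nat) :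
  submx_idx K b g m n = sel_mx b m *m K *m (sel_mx g n)^T.
Proof.
apply/matrixP => i j; rewrite !mxE.
under eq_bigr do rewrite !mxE mulr_natr.
under eq_bigr do under eq_bigr do rewrite !mxE mulr_natl.
under eq_bigr do rewrite sum_onth_eq.
rewrite sum_onth_eq.
by case: (onth (enum b) i) => [a|]; case: (onth (enum g) j).
Qed.

Lemma sel_mx_mul_trE (b g : {set 'I_N}) (m n : nat) i j :
  (sel_mx b m *m (sel_mx g n)^T) i j =
  if onth (enum b) i is Some a then (onth (enum g) j == Some a)%:R else 0.
Proof.
rewrite !mxE; under eq_bigr do rewrite !mxE mulr_natl; exact: sum_onth_eq.
Qed.

Lemma sel_mx_mul_tr1 (b : {set 'I_N}) (m : nat) :
  m = #|b| -> sel_mx b m *m (sel_mx b m)^T = 1%:M.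
Proof.
move=> mb; apply/matrixP => i j; rewrite sel_mx_mul_trE mxE.
have in_enum (k : 'I_m) : (k < size (enum b))%N by rewrite -cardE -mb.
case bi: (onth (enum b) i) => [a|]; last by move: (in_enum i); rewrite -onthTE bi.
case bj: (onth (enum b) j) => [c|]; last by move: (in_enum j); rewrite -onthTE bj.
rewrite -(onth_nth a a _ _ bi) -(onth_nth a c _ _ bj) (inj_eq Some_inj).
by rewrite nth_uniq ?enum_uniq // eq_sym.
Qed.

Lemma sel_mx_mul_trC (b : {set 'I_N}) (m n : nat) :
  sel_mx b m *m (sel_mx (~: b) n)^T = 0.
Proof.
apply/matrixP => i j; rewrite sel_mx_mul_trE mxE.
case bi: (onth (enum b) i) => [a|] //.
case bj: (onth (enum (~: b)) j) => [c|] //.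
have ab : a \in b by rewrite -mem_enum -(onth_nth a a _ _ bi) mem_nth // -onthTE bi.
have cb : c \in ~: b by rewrite -mem_enum -(onth_nth a c _ _ bj) mem_nth // -onthTE bj.
by case: eqP => // -[ca]; move: cb; rewrite ca inE ab.
Qed.

End SelectionMatrix.

Lemma form_subE (R : pzRingType) (m n : nat) (K : 'M[R]_n) (X Z : 'M[R]_(m, n)) :
  (X - Z) *m K *m (X - Z)^T
  = X *m K *m X^T - Z *m K *m X^T - (X *m K *m Z^T - Z *m K *m Z^T).
Proof. by rewrite linearB /= mulmxBl !mulmxBr !mulmxBl. Qed.

Lemma trmx_mul_invmx_sym (R : comUnitRingType) (m n : nat) (B : 'M[R]_n)
    (X : 'M[R]_(m, n)) :
  B^T = B -> (X *m invmx B)^T = invmx B *m X^T.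
Proof. by move=> sB; rewrite trmx_mul trmx_inv sB. Qed.

Lemma form_delta_mx (R : pzRingType) (n : nat) (D : 'M[R]_n) i j :
  (delta_mx 0 i : 'rV[R]_n) *m D *m (delta_mx 0 j)^T = (D i j)%:M.
Proof.
apply/matrixP => a b; rewrite !ord1 trmx_delta -rowE -colE !mxE.
by rewrite eqxx mulr1n.
Qed.

Section PositiveDefinite.
Variable R : realType.

Lemma posdef_unitmx (n : nat) (A : 'M[R]_n) : posdef A -> A \in unitmx.
Proof.
case=> _ formA; rewrite unitmxE unitfE; apply/negP => /det0P [v vn0 vA].
by have := formA v vn0; rewrite vA mul0mx mxE ltxx.
Qed.

Lemma posdef_form_ge0 (n : nat) (A : 'M[R]_n) (v : 'rV[R]_n) :
  posdef A -> 0 <= (v *m A *m v^T) 0 0.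
Proof.
case=> _ formA; have [->|vn0] := eqVneq v 0; first by rewrite !mul0mx mxE.
exact/ltW/formA.
Qed.

Lemma posdef_congr (m n : nat) (K : 'M[R]_n) (E : 'M[R]_(m, n)) (F : 'M[R]_(n, m)) :
  posdef K -> E *m F = 1%:M -> posdef (E *m K *m E^T).
Proof.
case=> sK formK EF; split; first by rewrite /sym_mx !trmx_mul trmxK sK mulmxA.
move=> v vn0; have : v *m E != 0.
  by apply: contra vn0 => /eqP vE; rewrite -(mulmx1 v) -EF mulmxA vE mul0mx.
by move/formK; rewrite !trmx_mul !mulmxA.
Qed.

Lemma posdef_schur_form (n m k : nat) (K : 'M[R]_n) (Ec : 'M[R]_(m, n))
    (Ea : 'M[R]_(k, n)) :
  posdef K -> Ec *m Ec^T = 1%:M -> Ea *m Ea^T = 1%:M -> Ea *m Ec^T = 0 ->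
  posdef (Ec *m K *m Ec^T
          - Ec *m K *m Ea^T *m invmx (Ea *m K *m Ea^T) *m (Ea *m K *m Ec^T)).
Proof.
move=> pK EcEc EaEa EaEc; have sK : K^T = K by case: pK.
have pP := posdef_congr pK EaEa; have uP := posdef_unitmx pP.
have sP : (Ea *m K *m Ea^T)^T = Ea *m K *m Ea^T by case: pP.
set P := Ea *m K *m Ea^T in pP uP sP *; set Q := Ec *m K *m Ea^T.
have QT : Ea *m K *m Ec^T = Q^T by rewrite !trmx_mul trmxK sK mulmxA.
rewrite QT; set Y := Q *m invmx P; set T := Ec - Y *m Ea.
have TEc : T *m Ec^T = 1%:M by rewrite mulmxBl -mulmxA EaEc mulmx0 subr0.
suff <- : T *m K *m T^T = Ec *m K *m Ec^T - Q *m invmx P *m Q^T.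
  exact: posdef_congr pK TEc.
have YEaEc : Y *m Ea *m K *m Ec^T = Q *m invmx P *m Q^T.
  by rewrite -!mulmxA [Ea *m _]mulmxA QT !mulmxA.
have EcYEa : Ec *m K *m (Y *m Ea)^T = Q *m invmx P *m Q^T.
  by rewrite trmx_mul trmx_mul_invmx_sym // !mulmxA.
have YEaYEa : Y *m Ea *m K *m (Y *m Ea)^T = Q *m invmx P *m Q^T.
  rewrite trmx_mul trmx_mul_invmx_sym // -!mulmxA [Ea *m (K *m _)]mulmxA.
  by rewrite [Ea *m K *m _]mulmxA -/P mulKmx.
by rewrite form_subE YEaEc EcYEa YEaYEa subrr subr0.
Qed.

Lemma schur_compl_posdef (N M : nat) (K : 'M[R]_N) (a : {set 'I_N}) :
  posdef K -> #|a| = M -> posdef (schur_compl M K a).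
Proof.
move=> pK aM; rewrite /schur_compl !submx_idxE.
apply: posdef_schur_form => //; last exact: sel_mx_mul_trC.
  by apply: sel_mx_mul_tr1; rewrite cardsCs card_ord setCK aM.
exact: sel_mx_mul_tr1.
Qed.

(* With x = u A^-1 and y = u B^-1, the forms u A^-1 u^T and u B^-1 u^T are
   compared through x (A - B) x^T >= 0 and (x - y) B (x - y)^T >= 0. *)
Lemma loewner_le_invmx (n : nat) (A B : 'M[R]_n) :
  posdef A -> posdef B -> loewner_le B A -> loewner_le (invmx A) (invmx B).
Proof.
move=> pA pB [_ formAB]; have uA := posdef_unitmx pA; have uB := posdef_unitmx pB.
have [sA sB] : A^T = A /\ B^T = B by case: pA; case: pB.
split=> [|u]; first by rewrite /sym_mx linearB /= !trmx_inv sA sB.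
set x := u *m invmx A; set y := u *m invmx B.
have ux : u *m x^T = u *m invmx A *m u^T by rewrite trmx_mul_invmx_sym // mulmxA.
have xAx : x *m A *m x^T = u *m invmx A *m u^T by rewrite mulmxKV // ux.
have yBx : y *m B *m x^T = u *m invmx A *m u^T by rewrite mulmxKV // ux.
have xBy : x *m B *m y^T = u *m invmx A *m u^T.
  by rewrite trmx_mul_invmx_sym // mulmxA mulmxK.
have yBy : y *m B *m y^T = u *m invmx B *m u^T.
  by rewrite mulmxKV // trmx_mul_invmx_sym // mulmxA.
have := formAB x; rewrite mulmxBr mulmxBl xAx.
have := posdef_form_ge0 (x - y) pB; rewrite form_subE yBx xBy yBy.
rewrite mulmxBr mulmxBl.
move: (u *m invmx A *m u^T) (u *m invmx B *m u^T) (x *m B *m x^T) => a b c.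
rewrite !mxE; lra.
Qed.

Lemma psd_mxtrace_gt0 (n : nat) (D : 'M[R]_n) : psd D -> D != 0 -> 0 < \tr D.
Proof.
move=> [sD formD] Dn0.
have diag_ge0 i : 0 <= D i i by have := formD (delta_mx 0 i); rewrite form_delta_mx mxE.
rewrite lt_def sumr_ge0 ?andbT //; apply: contra Dn0 => /eqP trD0.
have diag0 i : D i i = 0 by move/psumr_eq0P: trD0 => ->.
apply/eqP/matrixP => i j; rewrite mxE.
have Dji : D j i = D i j by rewrite -[in LHS]sD mxE.
(* the form at e_i - D_ij e_j equals -D_ij^2 *)
have := formD (delta_mx 0 i - D i j *: delta_mx 0 j).
rewrite [(_ - _)^T]linearB /= [(_ *: _)^T]linearZ /=.
rewrite !mulmxBl !mulmxBr -!scalemxAl -!scalemxAr.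
rewrite !form_delta_mx !mxE !diag0 Dji eqxx !mulr1n.
nra.
Qed.

End PositiveDefinite.

Theorem mainTheorem1 (R : realType) (N M : nat) (K : 'M[R]_N)
  (alpha_star : {set 'I_N}) :
  (2 <= N)%N -> (1 <= M)%N -> (M < N)%N ->
  posdef K ->
  #|alpha_star| = M ->
  (forall alpha : {set 'I_N}, #|alpha| = M ->
     \tr (invmx (schur_compl M K alpha))
       <= \tr (invmx (schur_compl M K alpha_star))) ->
  ~ (exists beta : {set 'I_N}, #|beta| = M /\
       loewner_lt (schur_compl M K beta) (schur_compl M K alpha_star)).
Proof.
move=> _ _ _ pK alphaM trmax [beta [betaM [BleA BneA]]].
set A := schur_compl M K alpha_star in trmax BleA BneA.
set B := schur_compl M K beta in BleA BneA.
have pA : posdef A := schur_compl_posdef pK alphaM.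
have pB : posdef B := schur_compl_posdef pK betaM.
have invB_neq_invA : invmx B != invmx A.
  by apply: contra_not_neq BneA => /(congr1 invmx); rewrite !invmxK.
have := psd_mxtrace_gt0 (loewner_le_invmx pA pB BleA).
rewrite subr_eq0 linearB /= subr_gt0 => /(_ invB_neq_invA).
by rewrite ltNge trmax.
Qed.
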